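(* For every positive integer $n$, $$\vartheta_2\!\left(\sum_{k=1}^{n} \frac{2^k}{k}\right) \geq s_2(n)$$ and, more strongly, $$\vartheta_2\!\left(\sum_{k=1}^{n} \frac{2^k}{k}\right) \geq n - \left\lfloor \frac{\log n}{\log 2} \right\rfloor.$$
   Context: $\vartheta_2$ denotes the $2$-adic valuation, extended to nonzero rational numbers by $\vartheta_2(a/b) = \vartheta_2(a) - \vartheta_2(b)$. $s_2(n)$ denotes the sum of the binary digits of $n$. $\lfloor x \rfloor$ is the integer part of $x$. *)

From mathcomp Require Import all_boot all_order all_algebra.
Set Implicit Arguments. Unset Strict Implicit. Unset Printing Implicit Defensive.
Import Order.TTheory GRing.Theory Num.Theory.

(* 2-adic valuation of a rational q (q = numq q / denq q in lowest terms):
   v2(q) = v2(numq q) - v2(denq q).  Meaningful for q <> 0. *)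
Definition v2 (q : rat) : int :=
  (logn 2 `|numq q|%N)%:Z - (logn 2 `|denq q|%N)%:Z.

(* sum of the binary digits of n: digit i is (n %/ 2^i) %% 2; digits with
   i > n vanish since n < 2^n. *)
Definition s2 (n : nat) : nat := \sum_(i < n.+1) ((n %/ 2 ^ i) %% 2).

Definition Hsum (n : nat) : rat :=
  \sum_(1 <= k < n.+1) ((2%:R : rat) ^+ k / k%:R).

From mathcomp Require Import all_boot all_order all_algebra.
From mathcomp Require Import zify ring.
Set Implicit Arguments. Unset Strict Implicit. Unset Printing Implicit Defensive.
Import Order.TTheory GRing.Theory Num.Theory.

(* Multiplying by n! gives n! H(n) = 2^n T(n) with T(n) = \sum_(k < n) k! (n-1-k)!,
   so v2(H(n)) = n + v2(T(n)) - v2(n!).  By Legendre, n - v2(n!) = s2(n), which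
   gives the first bound.  For the second, every term of T(n) satisfies
   v2(n!) - v2((j-1)! (n-j)!) = v2(j C(n,j)) <= floor(log2 n): by Kummer, v2(C(n,j))
   counts the carries in j + (n-j) in base 2, and these can only occur strictly
   above position v2(j) and at most at position floor(log2 n). *)

Section Kummer.

Variable p : nat.
Hypothesis p_pr : prime p.

Let p_gt1 : 1 < p. Proof. exact: prime_gt1. Qed.

Lemma logn_fact_wide m N : m <= N ->
  logn p m`! = \sum_(1 <= i < N.+1) m %/ p ^ i.
Proof.
move=> mN; rewrite logn_fact // (big_cat_nat (isT : 1 <= m.+1) (mN : m.+1 <= N.+1)) /=.
rewrite [X in _ = _ + X]big1_seq ?addn0 // => i /andP[_].
rewrite mem_index_iota => /andP[mi _]; apply: divn_small.
exact: ltn_trans mi (ltn_expl _ p_gt1).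
Qed.

Lemma logn_bin n j : j <= n ->
  logn p 'C(n, j) = \sum_(1 <= i < n.+1) (p ^ i <= j %% p ^ i + (n - j) %% p ^ i).
Proof.
move=> jn; have := congr1 (logn p) (bin_fact jn).
rewrite !lognM ?muln_gt0 ?fact_gt0 ?bin_gt0 //.
rewrite (logn_fact_wide (leqnn n)) (logn_fact_wide jn) (logn_fact_wide (leq_subr j n)).
have -> : \sum_(1 <= i < n.+1) n %/ p ^ i = \sum_(1 <= i < n.+1) (j %/ p ^ i
      + (n - j) %/ p ^ i + (p ^ i <= j %% p ^ i + (n - j) %% p ^ i)).
  by apply: eq_bigr => i _; rewrite -divnD ?expn_gt0 ?prime_gt0 // subnKC.
rewrite !big_split /=; lia.
Qed.

Lemma logn_mul_bin_le n j : 0 < j <= n -> logn p (j * 'C(n, j)) <= trunc_log p n.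
Proof.
move=> /andP[j0 jn]; rewrite lognM ?bin_gt0 // logn_bin //.
set a := logn p j; set L := trunc_log p n.
have aL : a <= L.
  by apply: trunc_log_max => //; apply: leq_trans jn; apply: dvdn_leq; last exact: pfactor_dvdnn.
have nL : n < p ^ L.+1 := trunc_log_ltn n p_gt1.
have Ln : L.+1 <= n.+1.
  by rewrite ltnS; apply: leq_trans (ltnW (ltn_expl L p_gt1)) (trunc_logP p_gt1 _); lia.
rewrite (big_cat_nat (isT : 1 <= a.+1)) /=; last by apply: leq_trans Ln; rewrite ltnS.
rewrite (big_cat_nat (aL : a.+1 <= L.+1) Ln) /=.
have no_carry_low : \sum_(1 <= i < a.+1) (p ^ i <= j %% p ^ i + (n - j) %% p ^ i) = 0.
  apply: big1_seq => i /andP[_]; rewrite mem_index_iota => /andP[_ ia].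
  have /eqP -> : j %% p ^ i == 0 by apply: dvdn_trans (pfactor_dvdnn p j); rewrite dvdn_exp2l.
  by rewrite add0n leqNgt ltn_pmod ?expn_gt0 ?prime_gt0.
have no_carry_high : \sum_(L.+1 <= i < n.+1) (p ^ i <= j %% p ^ i + (n - j) %% p ^ i) = 0.
  apply: big1_seq => i /andP[_]; rewrite mem_index_iota => /andP[Li _].
  have ni : n < p ^ i by apply: leq_trans nL _; rewrite leq_exp2l.
  rewrite !modn_small ?subnKC //; last exact: leq_ltn_trans jn ni.
    by rewrite leqNgt ni.
  exact: leq_ltn_trans (leq_subr j n) ni.
have carries_mid : \sum_(a.+1 <= i < L.+1) (p ^ i <= j %% p ^ i + (n - j) %% p ^ i) <= L - a.
  rewrite -[L - a]subSS -[L.+1 - a.+1]muln1 -sum_nat_const_nat.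
  by apply: leq_sum => i _; exact: leq_b1.
rewrite no_carry_low no_carry_high add0n addn0; lia.
Qed.

End Kummer.

Lemma s2_add_logn_fact n : s2 n + logn 2 n`! = n.
Proof.
have digits_tele N : \sum_(i < N) (n %/ 2 ^ i) %% 2 + \sum_(i < N) n %/ 2 ^ i.+1
                     + n %/ 2 ^ N = n.
  elim: N => [|N IH]; first by rewrite !big_ord0 expn0 divn1.
  have := divn_eq (n %/ 2 ^ N) 2; rewrite -divnMA -expnSr !big_ord_recr /=.
  by move=> halve; rewrite -[RHS]IH [in RHS]halve; ring.
have nN : n %/ 2 ^ n = 0 by apply/divn_small/ltn_expl.
rewrite /s2 big_ord_recr /= nN mod0n addn0 logn_fact //.
rewrite big_add1 /= big_mkord.
by have := digits_tele n; rewrite nN addn0.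
Qed.

Definition fact_conv (n : nat) : nat := \sum_(k < n) k`! * (n.-1 - k)`!.

Lemma fact_conv_gt0 n : 0 < n -> 0 < fact_conv n.
Proof. by case: n => // n _; rewrite /fact_conv big_ord_recl ltn_addr ?muln_gt0 ?fact_gt0. Qed.

(* Writing n+1 = (i+1) + (n-i) splits each term of (n+1) fact_conv n into
   (i+1)! (n-1-i)! + i! (n-i)!; each of the two resulting sums is fact_conv n.+1
   minus its first or its last term n!. *)
Lemma fact_convS n : 2 * fact_conv n.+1 = n.+1 * fact_conv n + 2 * n`!.
Proof.
have split_low : fact_conv n.+1 = n`! + \sum_(i < n) i.+1`! * (n.-1 - i)`!.
  rewrite /fact_conv big_ord_recl /= subn0 fact0 mul1n; congr addn.
  by apply: eq_bigr => i _; rewrite /bump /= add1n; congr (_ * _`!); lia.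
have split_high : fact_conv n.+1 = \sum_(i < n) i`! * (n - i)`! + n`!.
  by rewrite /fact_conv big_ord_recr /= subnn fact0 muln1.
have weigh : n.+1 * fact_conv n =
    \sum_(i < n) i.+1`! * (n.-1 - i)`! + \sum_(i < n) i`! * (n - i)`!.
  rewrite /fact_conv big_distrr -big_split /=; apply: eq_bigr => i _.
  have ltin := ltn_ord i.
  have -> : n - i = (n.-1 - i).+1 by lia.
  rewrite !factS; have -> : n.+1 = i.+1 + (n.-1 - i).+1 by lia.
  ring.
rewrite weigh mul2n -addnn {1}split_low split_high; ring.
Qed.

Lemma logn_fact_le_fact_conv p n : prime p -> 0 < n ->
  logn p n`! <= logn p (fact_conv n) + trunc_log p n.
Proof.
move=> p_pr n0; rewrite addnC -leq_subLR -pfactor_dvdn ?fact_conv_gt0 //.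
apply: dvdn_sum => k _; have kn := ltn_ord k.
have jn : 0 < k.+1 <= n by rewrite kn.
have fact_split : n`! = k.+1 * 'C(n, k.+1) * (k`! * (n.-1 - k)`!).
  rewrite -(bin_fact kn) factS; have -> : n.-1 - k = n - k.+1 by lia.
  ring.
rewrite pfactor_dvdn ?muln_gt0 ?fact_gt0 // fact_split.
rewrite lognM ?muln_gt0 ?fact_gt0 ?bin_gt0 //.
have := logn_mul_bin_le p_pr jn; lia.
Qed.

Local Open Scope ring_scope.

Lemma v2_ratio (a b : nat) : (0 < a)%N -> (0 < b)%N ->
  v2 (a%:R / b%:R) = (logn 2 a)%:Z - (logn 2 b)%:Z.
Proof.
move=> a0 b0; rewrite /v2; set q := (a%:R / b%:R : rat).
have b0R : (b%:R : rat) != 0 by rewrite pnatr_eq0 -lt0n.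
have cross : numq q * b%:Z = a%:Z * denq q.
  apply: (@intr_inj rat); rewrite !rmorphM /= numqE /q.
  by rewrite -!pmulrn mulrAC divfK.
have num0 : (0 < `|numq q|)%N.
  by rewrite absz_gt0 numq_eq0 /q mulf_eq0 invr_eq0 !pnatr_eq0 negb_or -!lt0n a0 b0.
have den0 : (0 < `|denq q|)%N by rewrite absz_gt0 denq_eq0.
have := congr1 (logn 2 \o absz) cross; rewrite /= !abszM !absz_nat !lognM //.
lia.
Qed.

Lemma mul_fact_Hsum n : n`!%:R * Hsum n = (2 ^ n * fact_conv n)%:R :> rat.
Proof.
elim: n => [|n IH]; first by rewrite /Hsum big_geq // mulr0 /fact_conv big_ord0 muln0.
rewrite /Hsum big_nat_recr //= -/(Hsum n) factS natrM mulrDr -mulrA IH.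
have n1 : (n.+1%:R : rat) != 0 by rewrite pnatr_eq0.
have -> : n.+1%:R * n`!%:R * (2 ^+ n.+1 / n.+1%:R) = (n`! * 2 ^ n.+1)%:R :> rat.
  by rewrite natrM natrX; field; rewrite addrC natr1.
rewrite -!natrM -natrD.
by congr _%:R; rewrite [in RHS]expnS -[in RHS]mulnA [in RHS]mulnCA fact_convS expnS; ring.
Qed.

Theorem theorem2 (n : nat) (hn : (0 < n)%N) :
  (s2 n)%:Z <= v2 (Hsum n) /\ n%:Z - (trunc_log 2 n)%:Z <= v2 (Hsum n).
Proof.
have fact0R : (n`!%:R : rat) != 0 by rewrite pnatr_eq0 -lt0n fact_gt0.
have -> : Hsum n = (2 ^ n * fact_conv n)%:R / n`!%:R by rewrite -mul_fact_Hsum mulrC mulKf.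
have conv0 := fact_conv_gt0 hn.
rewrite v2_ratio ?muln_gt0 ?expn_gt0 ?fact_gt0 //= lognM ?expn_gt0 // pfactorK //.
have := s2_add_logn_fact n; have := logn_fact_le_fact_conv (isT : prime 2) hn.
split; lia.
Qed.
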